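(* Let $(A,E)$ be the direct producted $W^*$-probability space over $D_N$ of $W^*$-probability spaces $(A_1,\varphi_1),\dots,(A_N,\varphi_N)$, and let $x=(a_1,\dots,a_N)\in A$. If every nonzero $a_i$ is even (resp. R-diagonal) in $(A_i,\varphi_i)$, $i\in\{1,\dots,N\}$, then $x$ is $D_N$-even (resp. $D_N$-valued R-diagonal) in $(A,E)$.
   Context: Each $A_j$ is a von Neumann algebra and $\varphi_j$ a state on $A_j$ with $\varphi_j(a^* )=\overline{\varphi_j(a)}$. $A=\times_{j=1}^N A_j$ with componentwise operations and adjoint $(a_1,\dots,a_N)^*=(a_1^*,\dots,a_N^* )$; $D_N=\mathbb{C}^N$ with componentwise operations, identified with the central subalgebra $\{(\alpha_1 1,\dots,\alpha_N 1)\}$ of $A$; $E((a_1,\dots,a_N))=(\varphi_1(a_1),\dots,\varphi_N(a_N))$. $D_N$-valued cumulants: $k_n(y_1,\dots,y_n)=\sum_{\sigma\in NC(n)}\prod_{V\in\sigma}E(\prod_{l\in V}y_l)\,\mu(\sigma,1_n)$; scalar cumulants $k_n^{(j)}$ are defined analogously with $\varphi_j$. $x\in A$ is $D_N$-even if it is self-adjoint and all odd trivial $D_N$-valued moments $E(x^{2m-1})$, $m\in\mathbb{N}$, vanish; $a\in A_j$ is even if it is self-adjoint and $\varphi_j(a^{2m-1})=0$ for all $m$. $x\in A$ is $D_N$-valued R-diagonal if the only nonvanishing mixed trivial $D_N$-valued cumulants of $x$ and $x^*$ are of the form $k_{2n}(x,x^*,\dots,x,x^* )$ or $k_{2n}(x^*,x,\dots,x^*,x)$,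 $n\in\mathbb{N}$; $a\in A_j$ is R-diagonal if the only nonvanishing cumulants $k^{(j)}_m(a^{u_1},\dots,a^{u_m})$, $u_l\in\{1,*\}$, are the alternating ones $k^{(j)}_{2n}(a,a^*,\dots,a,a^* )$ or $k^{(j)}_{2n}(a^*,a,\dots,a^*,a)$. *)

From HB Require Import structures.
From mathcomp Require Import all_boot all_order all_algebra complex.
From mathcomp Require Import reals.
Set Implicit Arguments. Unset Strict Implicit. Unset Printing Implicit Defensive.
Import Order.TTheory GRing.Theory Num.Theory.
Local Open Scope ring_scope.

(* Noncommutative probability spaces.  The complex numbers are R[i] for a   *)
(* real number field R : realType.  A (W-star) probability space (A_j,phi_j) *)
(* is modelled as a unital complex *-algebra with a state phi (linear,      *)
Record starProbSpace (R : realType) := StarProbSpace {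
  sps_alg  : algType R[i];
  sps_star : sps_alg -> sps_alg;
  sps_phi  : sps_alg -> R[i];
  sps_starD : forall x y, sps_star (x + y) = sps_star x + sps_star y;
  sps_starZ : forall (c : R[i]) x, sps_star (c *: x) = c^* *: sps_star x;
  sps_starM : forall x y, sps_star (x * y) = sps_star y * sps_star x;
  sps_starK : forall x, sps_star (sps_star x) = x;
  sps_phi_lin : forall (c : R[i]) x y,
      sps_phi (c *: x + y) = c * sps_phi x + sps_phi y;
  sps_phi1 : sps_phi 1 = 1;
  sps_phi_star : forall x, sps_phi (sps_star x) = (sps_phi x)^*;
  sps_phi_pos : forall x, 0 <= sps_phi (sps_star x * x)
}.

Definition noncrossing n (P : {set {set 'I_n}}) : bool :=
  [forall V in P, forall W in P, (V != W) ==>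
     [forall a : 'I_n, forall b : 'I_n, forall c : 'I_n, forall d : 'I_n,
        ~~ [&& (a < b)%N, (b < c)%N, (c < d)%N, a \in V, c \in V,
               b \in W & d \in W]]].

Definition isNC n (P : {set {set 'I_n}}) : bool :=
  partition P [set: 'I_n] && noncrossing P.

Definition refines n (P Q : {set {set 'I_n}}) : bool :=
  [forall V in P, [exists W in Q, V \subset W]].

Definition one_part n : {set {set 'I_n}} := [set [set: 'I_n]].

(* mu(P, 1_n) computed by the defining recursion of the Moebius function:   *)
(* mu(1_n,1_n) = 1,  mu(P,1_n) = - sum_{P < Q <= 1_n, Q in NC(n)} mu(Q,1_n). *)
(* The fuel k decreases since a strictly coarser partition has fewer blocks. *)
Fixpoint mobius_aux n (k : nat) (P : {set {set 'I_n}}) : int :=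
  match k with
  | 0 => 0
  | k'.+1 => if P == one_part n then 1
             else - \sum_(Q : {set {set 'I_n}} | isNC Q && refines P Q && (Q != P))
                      mobius_aux k' Q
  end.

Definition mobius n (P : {set {set 'I_n}}) : int := mobius_aux n.+1 P.

Definition scalar_cumulant (R : realType) (S : starProbSpace R) n
    (y : 'I_n -> sps_alg S) : R[i] :=
  \sum_(P : {set {set 'I_n}} | isNC P)
     (\prod_(V in P) sps_phi (\prod_(l < n | l \in V) y l)) * (mobius P)%:~R.

Definition is_even (R : realType) (S : starProbSpace R) (a : sps_alg S) : Prop :=
  sps_star a = a /\
  forall m : nat, (0 < m)%N -> sps_phi (a ^+ (2 * m - 1)) = 0.

(* u l = true means the l-th letter is a^*, false means a *)
Definition alternating_even n (u : 'I_n -> bool) : Prop :=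
  ~~ odd n /\ exists b : bool, forall l : 'I_n, u l = xorb b (odd l).

Definition is_Rdiagonal (R : realType) (S : starProbSpace R) (a : sps_alg S) : Prop :=
  forall (m : nat) (u : 'I_m -> bool), (0 < m)%N ->
    scalar_cumulant (fun l => if u l then sps_star a else a) <> 0 ->
    alternating_even u.

Definition DN (R : realType) (N : nat) := {ffun 'I_N -> R[i]}.

Definition prodA (R : realType) N (S : 'I_N -> starProbSpace R) :=
  forall j : 'I_N, sps_alg (S j).

Definition starA (R : realType) N (S : 'I_N -> starProbSpace R)
    (x : prodA S) : prodA S := fun j => sps_star (x j).

Definition expA (R : realType) N (S : 'I_N -> starProbSpace R)
    (x : prodA S) (k : nat) : prodA S := fun j => x j ^+ k.

Definition prodA_over (R : realType) N (S : 'I_N -> starProbSpace R) n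
    (V : {set 'I_n}) (y : 'I_n -> prodA S) : prodA S :=
  fun j => \prod_(l < n | l \in V) y l j.

Definition EA (R : realType) N (S : 'I_N -> starProbSpace R)
    (x : prodA S) : DN R N := [ffun j => sps_phi (x j)].

Definition DN_cumulant (R : realType) N (S : 'I_N -> starProbSpace R) n
    (y : 'I_n -> prodA S) : DN R N :=
  \sum_(P : {set {set 'I_n}} | isNC P)
     (\prod_(V in P) EA (prodA_over V y)) * (mobius P)%:~R.

Definition is_DN_even (R : realType) N (S : 'I_N -> starProbSpace R)
    (x : prodA S) : Prop :=
  starA x = x /\
  forall m : nat, (0 < m)%N -> EA (expA x (2 * m - 1)) = 0.

Definition is_DN_Rdiagonal (R : realType) N (S : 'I_N -> starProbSpace R)
    (x : prodA S) : Prop :=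
  forall (m : nat) (u : 'I_m -> bool), (0 < m)%N ->
    DN_cumulant (fun l => if u l then starA x else x) <> 0 ->
    alternating_even u.

(* The conditional expectation E of the direct product is computed
   componentwise, so every D_N-valued moment and cumulant of x is the tuple of
   the scalar moments and cumulants of its components.  Both evenness and
   R-diagonality of x therefore reduce to the same property of each
   component; the zero components have it trivially, because every moment and
   every cumulant of positive order of 0 vanishes. *)
From mathcomp Require Import all_boot all_order all_algebra complex.
From mathcomp Require Import reals.
Import GRing.Theory Num.Theory.
Local Open Scope ring_scope.

Lemma prod_ffunE (aT : finType) (R : pzSemiRingType) (I : Type) (r : seq I)
    (P : pred I) (F : I -> {ffun aT -> R}) x :
  (\prod_(i <- r | P i) F i) x = \prod_(i <- r | P i) F i x.
Proof. by elim/big_rec2: _ => [|i y z _ <-]; rewrite !ffunE. Qed.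

Section ScalarSpace.
Variables (R : realType) (T : starProbSpace R).

Lemma sps_phi0 : sps_phi (0 : sps_alg T) = 0.
Proof.
have := sps_phi_lin (-1) (1 : sps_alg T) 1.
by rewrite scaleN1r addNr mulN1r addNr.
Qed.

Lemma sps_star0 : sps_star (0 : sps_alg T) = 0.
Proof.
have := sps_starD (0 : sps_alg T) 0; rewrite addr0 => /eqP.
by rewrite eq_sym -subr_eq0 addrK => /eqP.
Qed.

Lemma eq_scalar_cumulant n (y z : 'I_n -> sps_alg T) :
  y =1 z -> scalar_cumulant y = scalar_cumulant z.
Proof.
move=> eq_yz; apply: eq_bigr => P _; congr (_ * _).
by apply: eq_bigr => V _; congr sps_phi; apply: eq_bigr => l _.
Qed.

(* As n > 0, every partition has a nonempty block, whose moment is phi(0) = 0. *)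
Lemma scalar_cumulant_eq0 n (y : 'I_n -> sps_alg T) :
  (0 < n)%N -> (forall l, y l = 0) -> scalar_cumulant y = 0.
Proof.
move=> n_gt0 y0; apply: big1 => P /andP[/and3P[/eqP coverP _ _] _].
have /bigcupP[V PV Vl] : Ordinal n_gt0 \in cover P by rewrite coverP inE.
rewrite (bigD1 V) //= (eq_bigr (fun=> 0)) // prodr_const expr0n.
have /negPf-> : #|V| != 0%N.
  by rewrite cards_eq0; apply/set0Pn; exists (Ordinal n_gt0).
by rewrite sps_phi0 !mul0r.
Qed.

Lemma is_even0 : is_even (0 : sps_alg T).
Proof.
split; first exact: sps_star0.
by case=> // m _; rewrite mulnS expr0n sps_phi0.
Qed.

Lemma is_Rdiagonal0 : is_Rdiagonal (0 : sps_alg T).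
Proof.
move=> m u m_gt0; rewrite scalar_cumulant_eq0 ?eqxx // => l.
by case: (u l); rewrite ?sps_star0.
Qed.

End ScalarSpace.

Section DirectProduct.
Variables (R : realType) (N : nat) (S : 'I_N -> starProbSpace R).

Lemma DN_cumulantE n (y : 'I_n -> prodA S) j :
  DN_cumulant y j = scalar_cumulant (fun l => y l j).
Proof.
rewrite /DN_cumulant /scalar_cumulant sum_ffunE; apply: eq_bigr => P _.
rewrite ffunE prod_ffunE ffunMzE ffunE; congr (_ * _).
by apply: eq_bigr => V _; rewrite ffunE.
Qed.

Lemma is_DN_even_componentwise (x : prodA S) :
  (forall j, is_even (x j)) -> is_DN_even x.
Proof.
move=> x_even; split.
  by apply: boolp.functional_extensionality_dep => j; case: (x_even j).
move=> m m_gt0; apply/ffunP => j; rewrite !ffunE.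
by case: (x_even j) => _ ->.
Qed.

Lemma is_DN_Rdiagonal_componentwise (x : prodA S) :
  (forall j, is_Rdiagonal (x j)) -> is_DN_Rdiagonal x.
Proof.
move=> x_Rdiag m u m_gt0 cum_neq0.
have [j cum_j] : exists j,
    DN_cumulant (fun l => if u l then starA x else x) j != 0.
  apply/existsP; apply: contraNT (introN eqP cum_neq0) => /existsPn cum0.
  by apply/eqP/ffunP => j; rewrite ffunE; apply/eqP/negPn.
apply: (x_Rdiag j m u m_gt0) => cum_j0; move/eqP: cum_j; apply.
rewrite DN_cumulantE -[RHS]cum_j0.
by apply: eq_scalar_cumulant => l; case: (u l).
Qed.

End DirectProduct.

Theorem mainTheorem12 (R : realType) (N : nat) (S : 'I_N -> starProbSpace R)
    (x : prodA S) :
  ((forall i : 'I_N, x i != 0 -> is_even (x i)) -> is_DN_even x) /\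
  ((forall i : 'I_N, x i != 0 -> is_Rdiagonal (x i)) -> is_DN_Rdiagonal x).
Proof.
split=> x_nz.
- apply: is_DN_even_componentwise => j.
  by have [->|/x_nz] := eqVneq (x j) 0; first exact: is_even0.
- apply: is_DN_Rdiagonal_componentwise => j.
  by have [->|/x_nz] := eqVneq (x j) 0; first exact: is_Rdiagonal0.
Qed.
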